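(* Consider a matched pair study ($n_i=2$). Suppose the bounded null $\overline H_0$ holds, $\Gamma^\star_{(k)}\le\Gamma_0$ for some $1\le k\le I$ and $\Gamma_0\in[1,\infty]$, and the statistic $t(\cdot,\cdot)$ is effect increasing or differential increasing. Then $\overline p_{\Gamma_0;k}$, computed with $q_{ij}=q_{ij}(Y)$ (i.e. pretending Fisher's sharp null holds so that $Y(0)=Y$) and $T=t(Z,Y)$, is still a valid $p$-value: $\mathbb P(\overline p_{\Gamma_0;k}\le\alpha)\le\alpha$ for all $\alpha\in(0,1)$.
   Context: Setting: $I$ matched pairs; potential outcomes fixed; $Z\in\mathcal Z=\{z\in\{0,1\}^{2I}:z_{i1}+z_{i2}=1\ \forall i\}$ random with true mechanism $\mathbb P(Z=z)=\prod_i\prod_j(p^\star_{ij})^{z_{ij}}$, $p^\star_{i1}+p^\star_{i2}=1$; $\Gamma^\star_i=\max_jp^\star_{ij}/\min_kp^\star_{ik}\in[1,\infty]$, $\Gamma^\star_{(k)}$ its $k$th smallest. Observed $Y=Z\circ Y(1)+(1-Z)\circ Y(0)$ ($\circ$ = elementwise product). Bounded null $\overline H_0$: $Y_{ij}(1)\le Y_{ij}(0)$ for all $i,j$. The statistic has the form $t(z,y)=\sum_i\sum_jz_{ij}q_{ij}(y)$ for functions $q_{ij}:\mathbb R^{2I}\to\mathbb R$. Effect increasing: $t(z,y+z\circ\eta+(1-z)\circ\xi)\ge t(z,y)$ for all $z\in\mathcal Z$, $y,\eta,\xi$ with $\eta\succcurlyeq0\succcurlyeq\xi$. Differential increasing: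 $t(z,y+a\circ\eta)-t(z,y)\le t(a,y+a\circ\eta)-t(a,y)$ for all $z,a\in\mathcal Z$, $y$, and $\eta\succcurlyeq0$. With $q_{ij}=q_{ij}(Y)$: $\mathcal I_k$ is a set of $k$ pairs with smallest $|q_{i1}-q_{i2}|$; $\overline T(\Gamma_0;k)$ is a sum of independent variables equal, for $i\in\mathcal I_k$, to $\max\{q_{i1},q_{i2}\}$ w.p. $\Gamma_0/(1+\Gamma_0)$ (w.p. 1 if $\Gamma_0=\infty$) and $\min\{q_{i1},q_{i2}\}$ otherwise, and for $i\notin\mathcal I_k$ to $\max\{q_{i1},q_{i2}\}$ w.p. 1; $\overline p_{\Gamma_0;k}=\mathbb P(\overline T(\Gamma_0;k)\ge c)|_{c=T}$ with $q_{ij}$ held fixed. *)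

From HB Require Import structures.
From mathcomp Require Import all_boot all_order all_algebra.
From mathcomp Require Import constructive_ereal.
Set Implicit Arguments. Unset Strict Implicit. Unset Printing Implicit Defensive.
Import Order.TTheory GRing.Theory Num.Theory.
Local Open Scope ring_scope.

(* Pairs are indexed by i : 'I_I, units within a pair by j : 'I_2.
   A vector in R^{2I} is a function 'I_I -> 'I_2 -> R. *)
Definition vec (R : Type) (I : nat) := 'I_I -> 'I_2 -> R.

(* An element of the assignment space \mathcal Z is encoded by the index of the
   treated unit in each pair; [zv z] is the corresponding 0/1 vector z_{ij}. *)
Definition assign (I : nat) := {ffun 'I_I -> 'I_2}.

Section Defs.
Variables (R : realFieldType) (I : nat).

Definition zv (z : assign I) : vec R I := fun i j => (((z i == j) : bool) : nat)%:R.

Definition Yobs (Y1 Y0 : vec R I) (z : assign I) : vec R I :=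
  fun i j => zv z i j * Y1 i j + (1 - zv z i j) * Y0 i j.

Definition bounded_null (Y1 Y0 : vec R I) : Prop :=
  forall i j, Y1 i j <= Y0 i j.

Definition tstat (q : 'I_I -> 'I_2 -> (vec R I -> R)) (z : assign I) (y : vec R I) : R :=
  \sum_(i < I) \sum_(j < 2) zv z i j * q i j y.

Definition effect_increasing (q : 'I_I -> 'I_2 -> (vec R I -> R)) : Prop :=
  forall (z : assign I) (y eta xi : vec R I),
    (forall i j, 0 <= eta i j) -> (forall i j, xi i j <= 0) ->
    tstat q z y <= tstat q z (fun i j => y i j + zv z i j * eta i j + (1 - zv z i j) * xi i j).

Definition differential_increasing (q : 'I_I -> 'I_2 -> (vec R I -> R)) : Prop :=
  forall (z a : assign I) (y eta : vec R I),
    (forall i j, 0 <= eta i j) ->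
    tstat q z (fun i j => y i j + zv a i j * eta i j) - tstat q z y <=
    tstat q a (fun i j => y i j + zv a i j * eta i j) - tstat q a y.

Definition prob_assign (p : vec R I) (z : assign I) : R :=
  \prod_(i < I) \prod_(j < 2) p i j ^+ (z i == j).

Definition is_mechanism (p : vec R I) : Prop :=
  forall i, 0 <= p i 0 /\ 0 <= p i 1 /\ p i 0 + p i 1 = 1.

Definition Prob (p : vec R I) (E : pred (assign I)) : R :=
  \sum_(z | E z) prob_assign p z.

Definition Gamma_i (p : vec R I) (i : 'I_I) : \bar R :=
  let mx := Num.max (p i 0) (p i 1) in
  let mn := Num.min (p i 0) (p i 1) in
  if mn == 0 then +oo%E else (mx / mn)%:E.

(* Gamma*_(k): the k-th smallest of the Gamma*_i (k is 1-based). *)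
Definition Gamma_ord (p : vec R I) (k : nat) : \bar R :=
  nth +oo%E (sort (fun x y : \bar R => (x <= y)%E) [seq Gamma_i p i | i <- enum 'I_I]) k.-1.

Definition pi_of (G0 : \bar R) : R :=
  match G0 with
  | EFin g => g / (1 + g)
  | +oo%E => 1
  | -oo%E => 0
  end.

(* [pbar G0 S qv c] = P(Tbar(G0; k) >= c), where S plays the role of I_k and the
   q_{ij} are held fixed at qv.  Tbar is a sum of independent variables: b i = true
   means pair i contributes max{q_i1,q_i2}, b i = false means min{q_i1,q_i2}. *)
Definition pbar (G0 : \bar R) (S : {set 'I_I}) (qv : vec R I) (c : R) : R :=
  \sum_(b : {ffun 'I_I -> bool})
     (\prod_(i < I)
        (if i \in S then (if b i then pi_of G0 else 1 - pi_of G0)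
         else (if b i then 1 else 0)))
     * (((c <= \sum_(i < I) (if b i then Num.max (qv i 0) (qv i 1)
                                   else Num.min (qv i 0) (qv i 1)))%R : bool) : nat)%:R.

Definition smallest_k_set (qv : vec R I) (k : nat) (S : {set 'I_I}) : Prop :=
  #|S| = k /\
  forall i i', i \in S -> i' \notin S -> `|qv i 0 - qv i 1| <= `|qv i' 0 - qv i' 1|.

End Defs.

From Pilot Require Import Defs.
From HB Require Import structures.
From mathcomp Require Import all_boot all_order all_algebra.
From mathcomp Require Import constructive_ereal perm.
From mathcomp Require Import ring lra.
From Stdlib Require Import FunctionalExtensionality.
Set Implicit Arguments. Unset Strict Implicit. Unset Printing Implicit Defensive.
Import Order.TTheory GRing.Theory Num.Theory.
Local Open Scope ring_scope.
(* Re-import Defs so that its [pi_of] shadows prime.v's [pi_of]. *)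
Import Pilot.Defs.

(* Fix an observed assignment z and write y = Y(z).  Encode an assignment a by
   the boolean vector "in pair i, a treats the unit with the larger q_{ij}(y)";
   then t(a, y) = sum_i (if b_i then max_i else min_i) and, under the true
   mechanism, the b_i are independent Bernoulli(r_i) with r_i <= max_j p*_ij.
   (1) The expectation of a coordinatewise increasing function of independent
       Bernoulli variables is increasing in every success probability.
   (2) Exchanging a pair of large spread for one of small spread in the set of
       Bernoulli(pi0) coordinates only increases P(sum >= c) (the others being
       fixed at "max"); so among k-sets the smallest-spread set I_k is worst.
   (3) Since Gamma*_(k) <= Gamma0, k pairs have r_i <= Gamma0/(1+Gamma0); by
       (1) and (2) the true tail P(t(Z', y) >= c) is at most pbar(c).
   (4) Effect or differential increasingness under the bounded null provides a
       fixed ranking W of assignments with W z <= W a -> t(z,Y(z)) <= t(a,Y(z)).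
       Hence pbar(z) dominates the survival function P(W(Z') >= W(z)), and any
       p-value dominating a survival function is valid. *)

Section BernoulliProduct.
Variables (R : realFieldType) (I : nat).

Definition bern_wt (x : R) (bb : bool) : R := if bb then x else 1 - x.

Definition bern_expect (r : 'I_I -> R) (f : {ffun 'I_I -> bool} -> R) : R :=
  \sum_(b : {ffun 'I_I -> bool}) (\prod_(i < I) bern_wt (r i) (b i)) * f b.

Definition flip_at (i0 : 'I_I) (b : {ffun 'I_I -> bool}) : {ffun 'I_I -> bool} :=
  [ffun i => if i == i0 then ~~ b i else b i].

Definition cube_increasing (f : {ffun 'I_I -> bool} -> R) : Prop :=
  forall (b : {ffun 'I_I -> bool}) i0, b i0 -> f (flip_at i0 b) <= f b.

Lemma flip_atK (i0 : 'I_I) : involutive (flip_at i0).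
Proof.
by move=> b; apply/ffunP => i; rewrite !ffunE; case: (i == i0); rewrite ?negbK.
Qed.

Lemma bern_wt_ge0 (x : R) bb : 0 <= x <= 1 -> 0 <= bern_wt x bb.
Proof. by case/andP=> h1 h2; case: bb => /=; lra. Qed.

Lemma bern_expect_ext (r1 r2 : 'I_I -> R) f :
  r1 =1 r2 -> bern_expect r1 f = bern_expect r2 f.
Proof. by move=> e; apply: eq_bigr => b _; under eq_bigr do rewrite e. Qed.

(* The two-point inequality behind monotonicity: raising the probability x of
   the larger outcome w raises the mixture. *)
Lemma bern_mix_mono (x y u w v : R) : x <= y -> u <= w -> 0 <= v ->
  x * v * w + (1 - x) * v * u <= y * v * w + (1 - y) * v * u.
Proof.
move=> hxy huw hv.
have : 0 <= (y - x) * v * (w - u) by rewrite !mulr_ge0 ?subr_ge0.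
lra.
Qed.

(* Monotonicity in a single success probability r i0: pair each b with its
   flip at i0; on each pair the claim is bern_mix_mono. *)
Lemma bern_expect_mono1 (i0 : 'I_I) (r1 r2 : 'I_I -> R) f :
  (forall i, i != i0 -> r1 i = r2 i) -> (forall i, i != i0 -> 0 <= r1 i <= 1) ->
  r1 i0 <= r2 i0 -> cube_increasing f -> bern_expect r1 f <= bern_expect r2 f.
Proof.
move=> e12 h01 le12 fm.
pose h r (b : {ffun 'I_I -> bool}) := (\prod_(i < I) bern_wt (r i) (b i)) * f b.
have paired r : 2 * bern_expect r f = \sum_b (h r b + h r (flip_at i0 b)).
  rewrite mulr2n mulrDl mul1r big_split /=; congr (_ + _).
  exact: (reindex_inj (inv_inj (@flip_atK i0))).
have split_i0 r (b : {ffun 'I_I -> bool}) : \prod_(i < I) bern_wt (r i) (b i) =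
    bern_wt (r i0) (b i0) * \prod_(i < I | i != i0) bern_wt (r i) (b i).
  by rewrite (bigD1 i0).
suff : 2 * bern_expect r1 f <= 2 * bern_expect r2 f by rewrite ler_pM2l.
rewrite !paired; apply: ler_sum => b _; rewrite /h !split_i0.
have rest_flip r : \prod_(i < I | i != i0) bern_wt (r i) (flip_at i0 b i) =
    \prod_(i < I | i != i0) bern_wt (r i) (b i).
  by apply: eq_bigr => i /negbTE hi; rewrite ffunE hi.
have rest12 : \prod_(i < I | i != i0) bern_wt (r1 i) (b i) =
    \prod_(i < I | i != i0) bern_wt (r2 i) (b i).
  by apply: eq_bigr => i /e12 ->.
have flip_i0 : flip_at i0 b i0 = ~~ b i0 by rewrite ffunE eqxx.
rewrite !rest_flip -rest12 flip_i0.
have v_ge0 : 0 <= \prod_(i < I | i != i0) bern_wt (r1 i) (b i).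
  by apply: prodr_ge0 => i /h01; apply: bern_wt_ge0.
case hb: (b i0) => /=; first exact: bern_mix_mono (fm _ _ hb) v_ge0.
have hflip : f b <= f (flip_at i0 b).
  by have := fm (flip_at i0 b) i0; rewrite flip_i0 hb flip_atK; apply.
by rewrite addrC [X in _ <= X]addrC; apply: bern_mix_mono.
Qed.

(* Monotonicity in all success probabilities: raise them one at a time. *)
Lemma bern_expect_mono (r1 r2 : 'I_I -> R) f :
  (forall i, 0 <= r1 i <= 1) -> (forall i, 0 <= r2 i <= 1) -> (forall i, r1 i <= r2 i) ->
  cube_increasing f -> bern_expect r1 f <= bern_expect r2 f.
Proof.
move=> h1 h2 h12 fm.
pose mix n (i : 'I_I) := if (i < n)%N then r2 i else r1 i.
have mix01 n i : 0 <= mix n i <= 1 by rewrite /mix; case: ifP.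
suff mixed n : bern_expect r1 f <= bern_expect (mix n) f.
  by rewrite (bern_expect_ext _ (_ : r2 =1 mix I)) // => i; rewrite /mix ltn_ord.
elim: n => [|n IH].
  by rewrite (bern_expect_ext _ (_ : r1 =1 mix 0)) // => i; rewrite /mix ltn0.
apply: le_trans IH _; case: (ltnP n I) => hn; last first.
  rewrite (bern_expect_ext _ (_ : mix n =1 mix n.+1)) // => i.
  by rewrite /mix (leq_trans (ltn_ord i) hn) (leq_trans (ltn_ord i) (leqW hn)).
apply: (@bern_expect_mono1 (Ordinal hn)) => //.
- move=> i hi; rewrite /mix ltnS [(i <= n)%N]leq_eqVlt.
  suff /negbTE -> : nat_of_ord i != n by [].
  by apply: contra hi => /eqP hin; apply/eqP/val_inj.
- by rewrite /mix /= ltnn ltnSn.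
Qed.

End BernoulliProduct.

Section TailExchange.
Variables (R : realFieldType) (I : nat) (M m : 'I_I -> R) (c : R).

Definition tail_ind (b : {ffun 'I_I -> bool}) : R :=
  (((c <= \sum_(i < I) (if b i then M i else m i))%R : bool) : nat)%:R.

Definition probs_on (pi0 : R) (J : {set 'I_I}) (i : 'I_I) : R :=
  if i \in J then pi0 else 1.

Lemma indicator_le_mono (s1 s2 : R) : s1 <= s2 ->
  (((c <= s1)%R : bool) : nat)%:R <= (((c <= s2)%R : bool) : nat)%:R :> R.
Proof.
move=> h; case h1: (c <= s1); last by case: (c <= s2).
by rewrite (le_trans h1 h).
Qed.

Lemma tail_ind_increasing : (forall i, m i <= M i) -> cube_increasing tail_ind.
Proof.
move=> hmM b i0 hb; apply: indicator_le_mono; apply: ler_sum => i _.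
by rewrite ffunE; case: eqP => [->|_]; rewrite ?hb ?hmM.
Qed.

Lemma probs_on01 (pi0 : R) J i : 0 <= pi0 <= 1 -> 0 <= probs_on pi0 J i <= 1.
Proof. by rewrite /probs_on; case: ifP => // _ _; rewrite ler01 lexx. Qed.

Lemma sum_split2 (i i' : 'I_I) (g : 'I_I -> R) : i != i' ->
  \sum_(k < I) g k = g i + g i' + \sum_(k < I | (k != i) && (k != i')) g k.
Proof.
move=> nii'; rewrite (bigD1 i) //= (bigD1 i') /=; last by rewrite eq_sym.
by rewrite addrA.
Qed.

(* The transposition
   (i i') maps the two product measures onto each other; outcomes charged by
   the new measure have success at i', where the summands compare by spread. *)
Lemma bern_expect_swap (pi0 : R) (J : {set 'I_I}) (i i' : 'I_I) :
  0 <= pi0 <= 1 -> i \notin J -> i' \in J -> M i - m i <= M i' - m i' ->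
  bern_expect (probs_on pi0 J) tail_ind <= bern_expect (probs_on pi0 (i |: (J :\ i'))) tail_ind.
Proof.
move=> hpi hi hi' hd.
have nii' : i != i' by apply: contraNneq hi => ->.
set J2 := i |: (J :\ i').
pose tau (b : {ffun 'I_I -> bool}) : {ffun 'I_I -> bool} := [ffun k => b (tperm i i' k)].
have tauK : involutive tau by move=> b; apply/ffunP => k; rewrite !ffunE tpermK.
rewrite /bern_expect (reindex_inj (inv_inj tauK)) /=; apply: ler_sum => b _.
have -> : \prod_(k < I) bern_wt (probs_on pi0 J k) (tau b k) =
          \prod_(k < I) bern_wt (probs_on pi0 J2 k) (b k).
  rewrite (reindex_inj (inv_inj (tpermK i i'))) /=.
  apply: eq_bigr => k _; rewrite ffunE tpermK /probs_on /J2 !inE.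
  case: tpermP => [->|->|/eqP hk1 /eqP hk2].
  - by rewrite eqxx hi'.
  - by rewrite (negbTE hi) eq_sym (negbTE nii') eqxx.
  - by rewrite (negbTE hk1) (negbTE hk2).
case hb': (b i'); last first.
  have -> : \prod_(k < I) bern_wt (probs_on pi0 J2 k) (b k) = 0.
    rewrite (bigD1 i') //= {1}/probs_on /J2 !inE eqxx /= eq_sym (negbTE nii') hb' /=.
    by rewrite subrr mul0r.
  by rewrite !mul0r.
apply: ler_wpM2l.
  by apply: prodr_ge0 => k _; apply: bern_wt_ge0; apply: probs_on01.
apply: indicator_le_mono; rewrite !(sum_split2 _ nii') /=.
have -> : \sum_(k < I | (k != i) && (k != i')) (if tau b k then M k else m k) =
          \sum_(k < I | (k != i) && (k != i')) (if b k then M k else m k).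
  by apply: eq_bigr => k /andP [h1 h2]; rewrite ffunE tpermD // eq_sym.
by rewrite !ffunE tpermL tpermR hb'; case: (b i); lra.
Qed.

(* Exchange argument: among sets of equal size, the set S of smallest spreads
   maximizes the tail probability.  Induction on #|J :\: S|. *)
Lemma bern_expect_smallest_spread (pi0 : R) (S : {set 'I_I}) :
  0 <= pi0 <= 1 ->
  (forall i i', i \in S -> i' \notin S -> M i - m i <= M i' - m i') ->
  forall J : {set 'I_I}, #|J| = #|S| ->
  bern_expect (probs_on pi0 J) tail_ind <= bern_expect (probs_on pi0 S) tail_ind.
Proof.
move=> hpi hS J; move: {2}#|J :\: S| (erefl #|J :\: S|) => n.
elim: n J => [|n IH] J hn hc.
  move/cards0_eq/eqP: hn; rewrite setD_eq0 => sJS.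
  by have /eqP -> : J == S by rewrite eqEcard sJS hc leqnn.
have /set0Pn [i' hi'] : J :\: S != set0 by rewrite -card_gt0 hn.
have hSJ : #|S :\: J| = #|J :\: S| by rewrite !cardsD setIC hc.
have /set0Pn [i hi] : S :\: J != set0 by rewrite -card_gt0 hSJ hn.
move: hi hi'; rewrite !inE => /andP [hiJ hiS] /andP [hi'S hi'J].
apply: le_trans (bern_expect_swap hpi hiJ hi'J (hS _ _ hiS hi'S)) _.
apply: IH; last first.
  by rewrite cardsU1 !inE (negbTE hiJ) andbF /= add1n -hc (cardsD1 i' J) hi'J.
have -> : (i |: (J :\ i')) :\: S = (J :\: S) :\ i'.
  apply/setP => x; rewrite !inE.
  by case: (eqVneq x i) => [->|_] /=; rewrite ?hiS ?andbF // andbCA.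
by have := cardsD1 i' (J :\: S); rewrite !inE hi'S hi'J hn /= add1n; case.
Qed.

End TailExchange.

Section SensitivityModel.
Variables (R : realFieldType) (I : nat).

Lemma pi_of01 (G0 : \bar R) : (1%:E <= G0)%E -> 0 <= pi_of G0 <= 1.
Proof.
case: G0 => [g| |] //=; rewrite ?lee_fin => hg; last by rewrite ler01 lexx.
have h1 : 0 < 1 + g by lra.
rewrite divr_ge0 ?(ltW h1) ?(le_trans ler01 hg) //=.
by rewrite ler_pdivrMr // mul1r; lra.
Qed.

Lemma maxr_sub_minr (x y : R) : Num.max x y - Num.min x y = `|x - y|.
Proof. by case: lerP. Qed.

(* In a pair with Gamma*_i <= Gamma0, each unit is treated with probability at
   most Gamma0 / (1 + Gamma0): max/min <= g and max + min = 1. *)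
Lemma max_prob_le_pi_of (p : vec R I) (G0 : \bar R) (i : 'I_I) :
  is_mechanism p -> (1%:E <= G0)%E -> (Gamma_i p i <= G0)%E ->
  Num.max (p i 0) (p i 1) <= pi_of G0.
Proof.
move=> hm; have [h0 [h1 hs]] := hm i.
have mx1 : Num.max (p i 0) (p i 1) <= 1 by rewrite ge_max; apply/andP; split; lra.
have mn0 : 0 <= Num.min (p i 0) (p i 1) by rewrite le_min h0.
have hsum := addr_max_min (p i 0) (p i 1).
rewrite /Gamma_i /=; case: G0 => [g| |] //=; rewrite ?lee_fin => hg.
case: eqP => // /eqP mnn0; rewrite lee_fin => hle.
have mnp : 0 < Num.min (p i 0) (p i 1) by rewrite lt_def mnn0 mn0.
move: hle; rewrite ler_pdivrMr // => hle.
have h1g : 0 < 1 + g by lra.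
rewrite ler_pdivlMr //.
move: hle hsum; set mx := Num.max _ _; set mn := Num.min _ _ => hle hsum.
have e : mn = 1 - mx by lra.
rewrite e in hle; nra.
Qed.

(* Gamma*_(k) <= Gamma0 yields k pairs whose Gamma*_i are all <= Gamma0: the
   first k entries of the sorted sequence of the Gamma*_i. *)
Lemma Gamma_ord_witness (p : vec R I) (G0 : \bar R) (k : nat) :
  (k <= I)%N -> (Gamma_ord p k <= G0)%E ->
  exists J : {set 'I_I}, #|J| = k /\ forall i, i \in J -> (Gamma_i p i <= G0)%E.
Proof.
move=> hkI; rewrite /Gamma_ord.
set le := (fun x y : \bar R => (x <= y)%E).
set s0 := [seq Gamma_i p i | i <- enum 'I_I].
set s := sort le s0 => hG.
have sz : size s = I by rewrite size_sort size_map size_enum_ord.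
pose P := (fun x : \bar R => (x <= G0)%E).
have head_small : all P (take k s).
  apply/(all_nthP +oo%E) => j; rewrite size_takel ?sz // => hj.
  rewrite nth_take //; apply: le_trans hG.
  apply: (sorted_leq_nth (@le_trans _ _) (@lexx _ _) +oo%E (sort_sorted le_total s0)).
  - by rewrite inE sz (leq_trans hj).
  - by rewrite inE sz; case: k hkI hj => // k' hk' _; rewrite (leq_trans _ hk').
  - by case: k hkI hj => // k' _; rewrite ltnS.
have cnt : (k <= count P s0)%N.
  have -> : count P s0 = count P s by apply/seq.permP; rewrite perm_sym perm_sort.
  rewrite -(cat_take_drop k s) count_cat.
  move: head_small; rewrite all_count => /eqP ->.
  by rewrite size_takel ?sz // leq_addr.
rewrite /s0 count_map in cnt.
set l := filter (preim (Gamma_i p) P) (enum 'I_I).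
have hl : (k <= size l)%N by rewrite size_filter.
exists [set x in take k l]; split.
  have u : uniq (take k l) by apply/take_uniq/filter_uniq/enum_uniq.
  by rewrite cardsE; move/card_uniqP: u => ->; rewrite size_takel.
by move=> i; rewrite inE => /mem_take; rewrite mem_filter => /andP [].
Qed.

End SensitivityModel.

Section AssignmentBasics.
Variables (R : realFieldType) (I : nat).

Lemma ord2_cases (j : 'I_2) : j = 0 \/ j = 1.
Proof. by case: j => [[|[|n]] hj]; [left|right|]; try apply: val_inj. Qed.

Lemma prob_assignE (p : vec R I) (a : assign I) :
  prob_assign p a = \prod_(i < I) p i (a i).
Proof.
apply: eq_bigr => i _; rewrite (bigD1 (a i)) //= eqxx expr1 big1 ?mulr1 //.
by move=> j; rewrite eq_sym => /negbTE ->; rewrite expr0.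
Qed.

Lemma prob_assign_ge0 (p : vec R I) (a : assign I) :
  is_mechanism p -> 0 <= prob_assign p a.
Proof.
move=> hm; rewrite prob_assignE; apply: prodr_ge0 => i _.
by have [h0 [h1 _]] := hm i; case: (ord2_cases (a i)) => ->.
Qed.

Lemma tstatE (q : 'I_I -> 'I_2 -> (vec R I -> R)) (a : assign I) (y : vec R I) :
  tstat q a y = \sum_(i < I) q i (a i) y.
Proof.
apply: eq_bigr => i _; rewrite (bigD1 (a i)) //= /zv eqxx mul1r big1 ?addr0 //.
by move=> j; rewrite eq_sym => /negbTE ->; rewrite mul0r.
Qed.

Lemma zv01 (z : assign I) i j : zv R z i j = 0 \/ zv R z i j = 1.
Proof. by rewrite /zv; case: (z i == j); [right|left]. Qed.

End AssignmentBasics.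

Section PairEncoding.
Variables (R : realFieldType) (I : nat) (qv : vec R I).

Definition qmax (i : 'I_I) : R := Num.max (qv i 0) (qv i 1).
Definition qmin (i : 'I_I) : R := Num.min (qv i 0) (qv i 1).

Lemma qmin_le_qmax i : qmin i <= qmax i.
Proof. by rewrite /qmin /qmax; case: (lerP (qv i 0) (qv i 1)) => // /ltW. Qed.

Definition hi_unit (i : 'I_I) : 'I_2 := if qv i 0 <= qv i 1 then 1 else 0.
Definition lo_unit (i : 'I_I) : 'I_2 := if qv i 0 <= qv i 1 then 0 else 1.

Definition assign_of_choice (b : {ffun 'I_I -> bool}) : assign I :=
  [ffun i => if b i then hi_unit i else lo_unit i].

Lemma assign_of_choice_bij : bijective assign_of_choice.
Proof.
have hi_lo i : (lo_unit i == hi_unit i) = false by rewrite /lo_unit /hi_unit; case: ifP.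
exists (fun a : assign I => [ffun i => a i == hi_unit i]).
  by move=> b; apply/ffunP => i; rewrite !ffunE; case: (b i); rewrite ?eqxx ?hi_lo.
move=> a; apply/ffunP => i; rewrite !ffunE; case: eqP => [//|].
by rewrite /lo_unit /hi_unit; case: ifP => _; case: (ord2_cases (a i)) => ->.
Qed.

Lemma q_assign_of_choice b i :
  qv i (assign_of_choice b i) = if b i then qmax i else qmin i.
Proof.
by rewrite ffunE /qmax /qmin /hi_unit /lo_unit; case: (b i); case: lerP.
Qed.

Lemma prob_assign_of_choice (p : vec R I) b : is_mechanism p ->
  prob_assign p (assign_of_choice b) = \prod_(i < I) bern_wt (p i (hi_unit i)) (b i).
Proof.
move=> hm; rewrite prob_assignE; apply: eq_bigr => i _; rewrite ffunE /bern_wt.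
have [_ [_ hs]] := hm i.
by case: (b i) => //; rewrite /lo_unit /hi_unit; case: ifP => _; lra.
Qed.

Lemma rand_tail_as_bern_expect (p : vec R I) (c : R) : is_mechanism p ->
  \sum_(a : assign I) prob_assign p a *
     (((c <= \sum_(i < I) qv i (a i))%R : bool) : nat)%:R =
  bern_expect (fun i => p i (hi_unit i)) (tail_ind qmax qmin c).
Proof.
move=> hm; rewrite (reindex assign_of_choice) /=; last first.
  by apply: onW_bij; apply: assign_of_choice_bij.
apply: eq_bigr => b _; rewrite prob_assign_of_choice //; congr (_ * _).
by rewrite /tail_ind; under eq_bigr do rewrite q_assign_of_choice.
Qed.

Lemma pbar_as_bern_expect (G0 : \bar R) (S : {set 'I_I}) (c : R) :
  pbar G0 S qv c = bern_expect (probs_on (pi_of G0) S) (tail_ind qmax qmin c).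
Proof.
apply: eq_bigr => b _; congr (_ * _); apply: eq_bigr => i _.
by rewrite /probs_on /bern_wt; case: (i \in S); case: (b i); rewrite ?subrr.
Qed.

End PairEncoding.

Lemma rand_tail_le_pbar (R : realFieldType) (I : nat) (p qv : vec R I)
    (G0 : \bar R) (k : nat) (S : {set 'I_I}) (c : R) :
  is_mechanism p -> (1%:E <= G0)%E -> (k <= I)%N -> (Gamma_ord p k <= G0)%E ->
  smallest_k_set qv k S ->
  \sum_(a : assign I) prob_assign p a *
     (((c <= \sum_(i < I) qv i (a i))%R : bool) : nat)%:R <= pbar G0 S qv c.
Proof.
move=> hm hG hkI hGk [hcard hS].
have hpi := pi_of01 hG.
have [J [hJ hJG]] := Gamma_ord_witness hkI hGk.
rewrite rand_tail_as_bern_expect // pbar_as_bern_expect.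
apply: (@le_trans _ _ (bern_expect (probs_on (pi_of G0) J) (tail_ind (qmax qv) (qmin qv) c))).
  apply: bern_expect_mono => [i|i|i|].
  - by have [h0 [h1 hs]] := hm i; rewrite /hi_unit; case: ifP => _; apply/andP; lra.
  - exact: probs_on01.
  - have le_max_p : p i (hi_unit qv i) <= Num.max (p i 0) (p i 1).
      by rewrite /hi_unit; case: ifP => _; rewrite le_max lexx ?orbT.
    rewrite /probs_on; case: ifP => [/hJG hi|_].
      exact: le_trans le_max_p (max_prob_le_pi_of hm hG hi).
    by apply: le_trans le_max_p _; rewrite ge_max; have [h0 [h1 hs]] := hm i; apply/andP; lra.
  - exact/tail_ind_increasing/qmin_le_qmax.
apply: bern_expect_smallest_spread => //; last by rewrite hJ hcard.
by move=> i i' hi hi'; rewrite /qmax /qmin !maxr_sub_minr; apply: hS.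
Qed.

(* The event
   {pv <= alpha} is contained in {W >= W zs} for its W-smallest element zs, so
   its probability is at most the survival at zs, hence at most alpha. *)
Lemma survival_pvalue_valid (R : realFieldType) (T : finType) (w W pv : T -> R)
    (alpha : R) :
  0 <= alpha -> (forall z, 0 <= w z) ->
  (forall z, \sum_a w a * (((W z <= W a)%R : bool) : nat)%:R <= pv z) ->
  \sum_(z | pv z <= alpha) w z <= alpha.
Proof.
move=> ha hw hpv.
have [z0 hz0|none] := pickP (fun z => pv z <= alpha); last by rewrite big_pred0.
have [zs hzs hmin] := @arg_minP _ _ _ z0 (fun z => pv z <= alpha) W hz0.
apply: le_trans (le_trans (hpv zs) hzs).
rewrite big_mkcond /=; apply: ler_sum => z _.
case: ifP => hz; last by rewrite mulr_ge0 // ler0n.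
by rewrite (hmin z hz) mulr1.
Qed.

Section BoundedNull.
Variables (R : realFieldType) (I : nat) (Y1 Y0 : vec R I).
Variable q : 'I_I -> 'I_2 -> (vec R I -> R).
Hypothesis null : bounded_null Y1 Y0.

(* Effect increasing: Y(z) arises from Y(a) by raising a's treated outcomes
   and lowering a's control outcomes, so t(a, Y(a)) <= t(a, Y(z)). *)
Lemma effect_increasing_step (z a : assign I) : effect_increasing q ->
  tstat q a (Yobs Y1 Y0 a) <= tstat q a (Yobs Y1 Y0 z).
Proof.
move=> hei.
have := hei a (Yobs Y1 Y0 a) (fun i j => (1 - zv R z i j) * (Y0 i j - Y1 i j))
   (fun i j => zv R z i j * (Y1 i j - Y0 i j)).
have -> : (fun i j => Yobs Y1 Y0 a i j + zv R a i j * ((1 - zv R z i j) * (Y0 i j - Y1 i j)) +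
    (1 - zv R a i j) * (zv R z i j * (Y1 i j - Y0 i j))) = Yobs Y1 Y0 z.
  apply: functional_extensionality => i; apply: functional_extensionality => j.
  by rewrite /Yobs; case: (zv01 R z i j) => ->; case: (zv01 R a i j) => ->; ring.
by apply=> i j; have := null i j; case: (zv01 R z i j) => -> h; lra.
Qed.

(* Differential increasing: Y(0) arises from Y(z) by raising z's treated
   outcomes, so the gain of t(a, .) is at most the gain of t(z, .). *)
Lemma differential_increasing_step (z a : assign I) : differential_increasing q ->
  tstat q a Y0 - tstat q a (Yobs Y1 Y0 z) <= tstat q z Y0 - tstat q z (Yobs Y1 Y0 z).
Proof.
move=> hdi; have := hdi a z (Yobs Y1 Y0 z) (fun i j => Y0 i j - Y1 i j).
have -> : (fun i j => Yobs Y1 Y0 z i j + zv R z i j * (Y0 i j - Y1 i j)) = Y0.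
  apply: functional_extensionality => i; apply: functional_extensionality => j.
  by rewrite /Yobs; case: (zv01 R z i j) => ->; ring.
by apply=> i j; have := null i j; lra.
Qed.

Lemma test_ranking : effect_increasing q \/ differential_increasing q ->
  exists W : assign I -> R, forall z a,
    W z <= W a -> tstat q z (Yobs Y1 Y0 z) <= tstat q a (Yobs Y1 Y0 z).
Proof.
case=> [hei|hdi].
  exists (fun a => tstat q a (Yobs Y1 Y0 a)) => z a h.
  exact: le_trans h (@effect_increasing_step z a hei).
exists (fun a => tstat q a Y0) => z a h.
by have := @differential_increasing_step z a hdi; lra.
Qed.

End BoundedNull.

Unset Implicit Arguments.

Theorem theoremA2 (R : realFieldType) (I : nat)
  (Y1 Y0 : vec R I) (p : vec R I)
  (q : 'I_I -> 'I_2 -> (vec R I -> R))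
  (k : nat) (G0 : \bar R)
  (Ik : assign I -> {set 'I_I}) :
  is_mechanism p ->
  bounded_null Y1 Y0 ->
  (1 <= k)%N -> (k <= I)%N ->
  (1%:E <= G0)%E ->
  (Gamma_ord p k <= G0)%E ->
  (effect_increasing q \/ differential_increasing q) ->
  (forall z, smallest_k_set (fun i j => q i j (Yobs Y1 Y0 z)) k (Ik z)) ->
  forall alpha : R, 0 < alpha < 1 ->
    Prob p (fun z => pbar G0 (Ik z) (fun i j => q i j (Yobs Y1 Y0 z))
                          (tstat q z (Yobs Y1 Y0 z)) <= alpha) <= alpha.
Proof.
move=> hm hnull _ hkI hG hGk hinc hIk alpha /andP [ha0 _].
have [W hW] := test_ranking hnull hinc.
apply: (survival_pvalue_valid (W := W) (ltW ha0)) => [a|z].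
  exact: prob_assign_ge0.
apply: le_trans (rand_tail_le_pbar _ hm hG hkI hGk (hIk z)).
apply: ler_sum => a _; apply: ler_wpM2l; first exact: prob_assign_ge0.
case: (boolP (W z <= W a)) => hza; last by rewrite ler0n.
by rewrite -tstatE hW.
Qed.
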